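(* Let $\Sigma\subseteq\mathcal L$ be closed under subformulas and let $\mathcal W=(W,\le,\ell,R)$ be a $\Sigma$-labelled system. Then its quotient $\mathcal Q=(W/{\sim},\le_{\mathcal Q},\ell_{\mathcal Q},R^+_{\mathcal Q})$ is a $\Sigma$-labelled system.
   Context: $\mathcal L$: formulas over propositional variables with $\wedge,\vee,\Rightarrow,\Leftarrow$ (co-implication), $\mathsf X,\mathsf Y,\mathsf G,\mathsf H,\mathsf U,\mathsf S$. Let $\Sigma\subseteq\mathcal L$ be closed under subformulas. A $\Sigma$-type is $\Phi\subseteq\Sigma$ such that: for $\varphi\wedge\psi\in\Sigma$, $\varphi\wedge\psi\in\Phi$ iff $\varphi,\psi\in\Phi$; for $\varphi\vee\psi\in\Sigma$, $\varphi\vee\psi\in\Phi$ iff $\varphi\in\Phi$ or $\psi\in\Phi$; for $\varphi\Rightarrow\psi\in\Sigma$, ($\varphi\Rightarrow\psi\in\Phi$ implies $\varphi\notin\Phi$ or $\psi\in\Phi$) and ($\psi\in\Phi$ implies $\varphi\Rightarrow\psi\in\Phi$); for $\varphi\Leftarrow\psi\in\Sigma$, ($\varphi\Leftarrow\psi\in\Phi$ implies $\varphi\in\Phi$) and ($\varphi\in\Phi,\psi\notin\Phi$ implies $\varphi\Leftarrow\psi\in\Phi$). A poset is locally linear if it is a disjoint union of linear posets; write $a\lessgtr b$ if $a\le b$ or $b\le a$. A $\Sigma$-labelled space is $(W,\le,\ell)$ with $(W,\le)$ locally linear, $\ell\colon W\to$ $\Sigma$-types, $w\le v\Rightarrow\ell(w)\supseteq\ell(v)$,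 such that whenever $\varphi\Rightarrow\psi\in\Sigma\setminus\ell(w)$ there is $v\le w$ with $\varphi\in\ell(v)$, $\psi\notin\ell(v)$, and whenever $\varphi\Leftarrow\psi\in\ell(w)$ there is $v\ge w$ with $\varphi\in\ell(v)$, $\psi\notin\ell(v)$. A relation $R\subseteq W\times W$ is convex if every image set and every preimage set of a point is convex in $\le$; fully confluent if (forth–down) $x\le x'Ry'$ implies $xRy\le y'$ for some $y$; (forth–up) $x'\ge xRy$ implies $x'Ry'\ge y$ for some $y'$; (back–down) $x'Ry'\ge y$ implies $x'\ge xRy$ for some $x$; (back–up) $xRy\le y'$ implies $x\le x'Ry'$ for some $x'$; bi-serial if every point has an $R$-successor and an $R$-predecessor. A pair $(\Phi,\Psi)$ of $\Sigma$-types is sensible if for formulas in $\Sigma$: $\mathsf X\varphi\in\Phi\iff\varphi\in\Psi$; $\mathsf Y\varphi\in\Psi\iff\varphi\in\Phi$; $\mathsf G\varphi\in\Phi\iff(\varphi\in\Phi\wedge\mathsf G\varphi\in\Psi)$; $\mathsf H\varphi\in\Psi\iff(\varphi\in\Psi\wedge\mathsf H\varphi\in\Phi)$; $\varphi\,\mathsf U\,\psi\in\Phi\iff(\psi\in\Phi$ or ($\varphi\in\Phi$ and $\varphi\,\mathsf U\,\psi\in\Psi$)); $\varphi\,\mathsf S\,\psi\in\Psi\iff(\psi\in\Psi$ or ($\varphi\in\Psi$ and $\varphi\,\mathsf S\,\psi\in\Phi$)). $R$ is sensible if $wRv$ implies $(\ell(w),\ell(v))$ sensible. A $\Sigma$-labelled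 system is a $\Sigma$-labelled space with a bi-serial, fully confluent, convex, sensible relation. Quotient: for $w\in W$ let $L(w)=\{\ell(v): v\lessgtr w\}$; $w\sim v$ iff $\ell(w)=\ell(v)$ and $L(w)=L(v)$. On $W/{\sim}$: $[w]\le_{\mathcal Q}[v]$ iff $L(w)=L(v)$ and $\ell(w)\supseteq\ell(v)$; $\ell_{\mathcal Q}([w])=\ell(w)$; $R_{\mathcal Q}$ is the smallest relation with $wRv\Rightarrow[w]R_{\mathcal Q}[v]$; $X R^+_{\mathcal Q} Y$ iff there are $X_1\le_{\mathcal Q}X\le_{\mathcal Q}X_2$ and $Y_1\le_{\mathcal Q}Y\le_{\mathcal Q}Y_2$ with $X_2R_{\mathcal Q}Y_1$ and $X_1R_{\mathcal Q}Y_2$. *)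

Set Implicit Arguments.
Unset Strict Implicit.

Inductive form : Type :=
| Var : nat -> form
| And : form -> form -> form
| Or : form -> form -> form
| Imp : form -> form -> form
| Coimp : form -> form -> form
| Next : form -> form
| Prev : form -> form
| Glob : form -> form
| Hist : form -> form
| Until : form -> form -> form
| Since : form -> form -> form.

Definition fset := form -> Prop.

Definition seteq (A B : fset) : Prop := forall f, A f <-> B f.

Definition subformula_closed (Sigma : fset) : Prop :=
  forall f, Sigma f ->
  match f with
  | Var _ => True
  | And a b | Or a b | Imp a b | Coimp a b | Until a b | Since a b =>
      Sigma a /\ Sigma b
  | Next a | Prev a | Glob a | Hist a => Sigma a
  end.

Definition is_type (Sigma Phi : fset) : Prop :=
  (forall f, Phi f -> Sigma f) /\
  (forall a b, Sigma (And a b) -> (Phi (And a b) <-> Phi a /\ Phi b)) /\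
  (forall a b, Sigma (Or a b) -> (Phi (Or a b) <-> Phi a \/ Phi b)) /\
  (forall a b, Sigma (Imp a b) ->
     (Phi (Imp a b) -> ~ Phi a \/ Phi b) /\ (Phi b -> Phi (Imp a b))) /\
  (forall a b, Sigma (Coimp a b) ->
     (Phi (Coimp a b) -> Phi a) /\ (Phi a -> ~ Phi b -> Phi (Coimp a b))).

Section Structures.
Variable W : Type.

Definition comparable (le : W -> W -> Prop) (a b : W) : Prop := le a b \/ le b a.

(* locally linear poset: a partial order which is a disjoint union of linear
   posets, i.e. there is a partition of W (equivalence E) into blocks such
   that each block is linearly ordered and the order only relates elements of
   the same block *)
Definition locally_linear (le : W -> W -> Prop) : Prop :=
  (forall a, le a a) /\
  (forall a b, le a b -> le b a -> a = b) /\
  (forall a b c, le a b -> le b c -> le a c) /\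
  exists E : W -> W -> Prop,
    (forall a, E a a) /\ (forall a b, E a b -> E b a) /\
    (forall a b c, E a b -> E b c -> E a c) /\
    (forall a b, E a b -> comparable le a b) /\
    (forall a b, le a b -> E a b).

Definition labelled_space (Sigma : fset) (le : W -> W -> Prop) (lab : W -> fset)
  : Prop :=
  locally_linear le /\
  (forall w, is_type Sigma (lab w)) /\
  (forall w v, le w v -> forall f, lab v f -> lab w f) /\
  (forall w a b, Sigma (Imp a b) -> ~ lab w (Imp a b) ->
     exists v, le v w /\ lab v a /\ ~ lab v b) /\
  (forall w a b, lab w (Coimp a b) ->
     exists v, le w v /\ lab v a /\ ~ lab v b).

Definition convex_set (le : W -> W -> Prop) (A : W -> Prop) : Prop :=
  forall y1 y y2, A y1 -> A y2 -> le y1 y -> le y y2 -> A y.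

Definition convex_rel (le : W -> W -> Prop) (R : W -> W -> Prop) : Prop :=
  (forall x, convex_set le (fun y => R x y)) /\
  (forall y, convex_set le (fun x => R x y)).

Definition fully_confluent (le : W -> W -> Prop) (R : W -> W -> Prop) : Prop :=
  (forall x x' y', le x x' -> R x' y' -> exists y, R x y /\ le y y') /\
  (forall x x' y, le x x' -> R x y -> exists y', R x' y' /\ le y y') /\
  (forall x' y' y, R x' y' -> le y y' -> exists x, le x x' /\ R x y) /\
  (forall x y y', R x y -> le y y' -> exists x', le x x' /\ R x' y').

Definition bi_serial (R : W -> W -> Prop) : Prop :=
  forall x, (exists y, R x y) /\ (exists y, R y x).

Definition sensible_pair (Sigma Phi Psi : fset) : Prop :=
  (forall a, Sigma (Next a) -> (Phi (Next a) <-> Psi a)) /\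
  (forall a, Sigma (Prev a) -> (Psi (Prev a) <-> Phi a)) /\
  (forall a, Sigma (Glob a) -> (Phi (Glob a) <-> Phi a /\ Psi (Glob a))) /\
  (forall a, Sigma (Hist a) -> (Psi (Hist a) <-> Psi a /\ Phi (Hist a))) /\
  (forall a b, Sigma (Until a b) ->
     (Phi (Until a b) <-> Phi b \/ (Phi a /\ Psi (Until a b)))) /\
  (forall a b, Sigma (Since a b) ->
     (Psi (Since a b) <-> Psi b \/ (Psi a /\ Phi (Since a b)))).

Definition sensible_rel (Sigma : fset) (lab : W -> fset) (R : W -> W -> Prop)
  : Prop :=
  forall w v, R w v -> sensible_pair Sigma (lab w) (lab v).

Definition labelled_system (Sigma : fset) (le : W -> W -> Prop)
  (lab : W -> fset) (R : W -> W -> Prop) : Prop :=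
  labelled_space Sigma le lab /\ bi_serial R /\ fully_confluent le R /\
  convex_rel le R /\ sensible_rel Sigma lab R.

(* L(w) = { lab v | v comparable with w }, as a set of label-sets
   (membership up to extensional equality of label-sets) *)
Definition Lset (le : W -> W -> Prop) (lab : W -> fset) (w : W) : fset -> Prop :=
  fun T => exists v, comparable le v w /\ seteq (lab v) T.

Definition Lseteq (le : W -> W -> Prop) (lab : W -> fset) (w v : W) : Prop :=
  forall T, Lset le lab w T <-> Lset le lab v T.

Definition sim (le : W -> W -> Prop) (lab : W -> fset) (w v : W) : Prop :=
  seteq (lab w) (lab v) /\ Lseteq le lab w v.

Definition quot (le : W -> W -> Prop) (lab : W -> fset) : Type :=
  { P : W -> Prop | exists w, P = sim le lab w }.

Definition cls (le : W -> W -> Prop) (lab : W -> fset) (w : W) : quot le lab :=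
  exist _ (sim le lab w) (ex_intro _ w eq_refl).

Definition leQ (le : W -> W -> Prop) (lab : W -> fset)
  (X Y : quot le lab) : Prop :=
  exists w v, X = cls le lab w /\ Y = cls le lab v /\
    Lseteq le lab w v /\ (forall f, lab v f -> lab w f).

Definition labQ (le : W -> W -> Prop) (lab : W -> fset)
  (X : quot le lab) : fset :=
  fun f => exists w, X = cls le lab w /\ lab w f.

Definition RQ (le : W -> W -> Prop) (lab : W -> fset) (R : W -> W -> Prop)
  (X Y : quot le lab) : Prop :=
  exists w v, X = cls le lab w /\ Y = cls le lab v /\ R w v.

Definition RQplus (le : W -> W -> Prop) (lab : W -> fset) (R : W -> W -> Prop)
  (X Y : quot le lab) : Prop :=
  exists X1 X2 Y1 Y2,
    leQ X1 X /\ leQ X X2 /\ leQ Y1 Y /\ leQ Y Y2 /\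
    RQ R X2 Y1 /\ RQ R X1 Y2.

End Structures.

From Stdlib Require Import FunctionalExtensionality PropExtensionality.

(* The key fact is that below (resp. above) the class [p] every class
      has a representative below (resp. above) p; from it the quotient
      order is locally linear, the quotient is a labelled space, and the
      image R_Q of R is bi-serial, fully confluent and sensible.
   4. Since R^+_Q is the convex closure of R_Q, parts 2 and 3 give the
      theorem. *)

Set Implicit Arguments.
Unset Strict Implicit.

Definition subset (A B : fset) : Prop := forall f, A f -> B f.

Definition future_sensible (Sigma Phi Psi : fset) : Prop :=
  (forall a, Sigma (Next a) -> (Phi (Next a) <-> Psi a)) /\
  (forall a, Sigma (Glob a) -> (Phi (Glob a) <-> Phi a /\ Psi (Glob a))) /\
  (forall a b, Sigma (Until a b) ->
     (Phi (Until a b) <-> Phi b \/ (Phi a /\ Psi (Until a b)))).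

Definition past_sensible (Sigma Phi Psi : fset) : Prop :=
  (forall a, Sigma (Prev a) -> (Psi (Prev a) <-> Phi a)) /\
  (forall a, Sigma (Hist a) -> (Psi (Hist a) <-> Psi a /\ Phi (Hist a))) /\
  (forall a b, Sigma (Since a b) ->
     (Psi (Since a b) <-> Psi b \/ (Psi a /\ Phi (Since a b)))).

Lemma sensible_pair_split (Sigma Phi Psi : fset) :
  future_sensible Sigma Phi Psi -> past_sensible Sigma Phi Psi ->
  sensible_pair Sigma Phi Psi.
Proof.
  intros (hX & hG & hU) (hY & hH & hS).
  exact (conj hX (conj hY (conj hG (conj hH (conj hU hS))))).
Qed.

Lemma sensible_pair_future (Sigma Phi Psi : fset) :
  sensible_pair Sigma Phi Psi -> future_sensible Sigma Phi Psi.
Proof. intros (hX & _ & hG & _ & hU & _); exact (conj hX (conj hG hU)). Qed.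

Lemma sensible_pair_past (Sigma Phi Psi : fset) :
  sensible_pair Sigma Phi Psi -> past_sensible Sigma Phi Psi.
Proof. intros (_ & hY & _ & hH & _ & hS); exact (conj hY (conj hH hS)). Qed.

Lemma future_sandwich (Sigma Phi Psi Psi_lo Psi_hi : fset) :
  future_sensible Sigma Phi Psi_lo -> future_sensible Sigma Phi Psi_hi ->
  subset Psi_lo Psi -> subset Psi Psi_hi ->
  future_sensible Sigma Phi Psi.
Proof.
  intros (lo_X & lo_G & lo_U) (hi_X & hi_G & hi_U) lo_sub hi_sup.
  split; [|split].
  - intros a s; specialize (lo_X a s); specialize (hi_X a s).
    specialize (lo_sub a); specialize (hi_sup a); tauto.
  - intros a s; specialize (lo_G a s); specialize (hi_G a s).
    specialize (lo_sub (Glob a)); specialize (hi_sup (Glob a)); tauto.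
  - intros a b s; specialize (lo_U a b s); specialize (hi_U a b s).
    specialize (lo_sub (Until a b)); specialize (hi_sup (Until a b)); tauto.
Qed.

Lemma past_sandwich (Sigma Phi Psi Phi_lo Phi_hi : fset) :
  past_sensible Sigma Phi_lo Psi -> past_sensible Sigma Phi_hi Psi ->
  subset Phi_lo Phi -> subset Phi Phi_hi ->
  past_sensible Sigma Phi Psi.
Proof.
  intros (lo_Y & lo_H & lo_S) (hi_Y & hi_H & hi_S) lo_sub hi_sup.
  split; [|split].
  - intros a s; specialize (lo_Y a s); specialize (hi_Y a s).
    specialize (lo_sub a); specialize (hi_sup a); tauto.
  - intros a s; specialize (lo_H a s); specialize (hi_H a s).
    specialize (lo_sub (Hist a)); specialize (hi_sup (Hist a)); tauto.
  - intros a b s; specialize (lo_S a b s); specialize (hi_S a b s).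
    specialize (lo_sub (Since a b)); specialize (hi_sup (Since a b)); tauto.
Qed.

Lemma comparable_sym (V : Type) (le : V -> V -> Prop) a b :
  comparable le a b -> comparable le b a.
Proof. intros [h | h]; [right | left]; exact h. Qed.

(* A partial order in which comparability is transitive is locally linear:
   its components are the classes of the comparability relation. *)
Lemma locally_linear_of_comparable_trans (V : Type) (le : V -> V -> Prop) :
  (forall a, le a a) ->
  (forall a b, le a b -> le b a -> a = b) ->
  (forall a b c, le a b -> le b c -> le a c) ->
  (forall a b c, comparable le a b -> comparable le b c -> comparable le a c) ->
  locally_linear le.
Proof.
  intros refl antisym trans ctrans.
  split; [exact refl | split; [exact antisym | split; [exact trans |]]].
  exists (comparable le).
  split; [left; apply refl |].
  split; [apply comparable_sym |].
  split; [exact ctrans |].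
  split; [intros a b h; exact h | intros a b h; left; exact h].
Qed.

(* In a locally linear order, points are comparable iff they lie in the same
   component, so comparability is transitive. *)
Lemma comparable_trans (V : Type) (le : V -> V -> Prop) :
  locally_linear le ->
  forall a b c, comparable le a b -> comparable le b c -> comparable le a c.
Proof.
  intros (_ & _ & _ & E & _ & Esym & Etrans & Ecomp & Ele) a b c hab hbc.
  apply Ecomp, (Etrans a b c).
  - destruct hab; [apply Ele | apply Esym, Ele]; assumption.
  - destruct hbc; [apply Ele | apply Esym, Ele]; assumption.
Qed.

Section ConvexClosure.

Variable V : Type.
Variable le : V -> V -> Prop.
Hypothesis le_refl : forall a, le a a.
Hypothesis le_trans : forall a b c, le a b -> le b c -> le a c.
Variable S : V -> V -> Prop.

Definition convex_closure (X Y : V) : Prop :=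
  exists X1 X2 Y1 Y2,
    le X1 X /\ le X X2 /\ le Y1 Y /\ le Y Y2 /\ S X2 Y1 /\ S X1 Y2.

Lemma convex_closure_incl X Y : S X Y -> convex_closure X Y.
Proof. intro h; exists X, X, Y, Y; repeat split; auto. Qed.

Lemma convex_closure_convex : convex_rel le convex_closure.
Proof.
  split.
  - intros X Y1 Y Y2 (A1 & A2 & B1 & B2 & a1 & a2 & a3 & a4 & ra & rb)
      (C1 & C2 & D1 & D2 & c1 & c2 & c3 & c4 & rc & rd) h1 h2.
    exists C1, A2, B1, D2; repeat split; eauto.
  - intros Y X1 X X2 (A1 & A2 & B1 & B2 & a1 & a2 & a3 & a4 & ra & rb)
      (C1 & C2 & D1 & D2 & c1 & c2 & c3 & c4 & rc & rd) h1 h2.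
    exists A1, C2, D1, B2; repeat split; eauto.
Qed.

(* Bi-seriality and full confluence pass from S to S+: an S+-edge is
   bracketed by S-edges, to which the confluence of S is applied. *)
Lemma convex_closure_bi_serial : bi_serial S -> bi_serial convex_closure.
Proof.
  intros ser X; destruct (ser X) as [[Y hY] [Z hZ]].
  split; [exists Y | exists Z]; apply convex_closure_incl; assumption.
Qed.

Hypothesis S_conf : fully_confluent le S.

Lemma convex_closure_confluent : fully_confluent le convex_closure.
Proof.
  destruct S_conf as (fd & fu & bd & bu).
  split; [|split; [|split]].
  - intros X X' Y' hle (X1 & X2 & Y1 & Y2 & h1 & h2 & h3 & h4 & r1 & r2).
    destruct (fd X X2 Y1 (le_trans hle h2) r1) as (Y & r & h).
    exists Y; split; [apply convex_closure_incl | eauto]; assumption.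
  - intros X X' Y hle (X1 & X2 & Y1 & Y2 & h1 & h2 & h3 & h4 & r1 & r2).
    destruct (fu X1 X' Y2 (le_trans h1 hle) r2) as (Y' & r & h).
    exists Y'; split; [apply convex_closure_incl | eauto]; assumption.
  - intros X' Y' Y (X1 & X2 & Y1 & Y2 & h1 & h2 & h3 & h4 & r1 & r2) hle.
    destruct (bd X1 Y2 Y r2 (le_trans hle h4)) as (X & h & r).
    exists X; split; [eauto | apply convex_closure_incl]; assumption.
  - intros X Y Y' (X1 & X2 & Y1 & Y2 & h1 & h2 & h3 & h4 & r1 & r2) hle.
    destruct (bu X2 Y1 Y' r1 (le_trans h3 hle)) as (X' & h & r).
    exists X'; split; [eauto | apply convex_closure_incl]; assumption.
Qed.

(* For an antitone labelling, confluence provides S-successors of X below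
   and above Y, and S-predecessors of Y below and above X; their labels
   sandwich those of Y and X, so the sandwich lemmas apply. *)
Lemma convex_closure_sensible (Sigma : fset) (lab : V -> fset) :
  (forall X Y, le X Y -> subset (lab Y) (lab X)) ->
  sensible_rel Sigma lab S -> sensible_rel Sigma lab convex_closure.
Proof.
  intros anti sens X Y (X1 & X2 & Y1 & Y2 & h1 & h2 & h3 & h4 & r1 & r2).
  destruct S_conf as (fd & fu & bd & bu).
  destruct (fd X X2 Y1 h2 r1) as (Y_lo & r_lo & hY_lo).
  destruct (fu X1 X Y2 h1 r2) as (Y_hi & r_hi & hY_hi).
  destruct (bd X1 Y2 Y r2 h4) as (X_lo & hX_lo & s_lo).
  destruct (bu X2 Y1 Y r1 h3) as (X_hi & hX_hi & s_hi).
  apply sensible_pair_split.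
  - apply (future_sandwich (Psi_lo := lab Y_hi) (Psi_hi := lab Y_lo));
      try apply sensible_pair_future, sens; try assumption; apply anti; eauto.
  - apply (past_sandwich (Phi_lo := lab X_hi) (Phi_hi := lab X_lo));
      try apply sensible_pair_past, sens; try assumption; apply anti; eauto.
Qed.

End ConvexClosure.

Section Quotient.

Variable W : Type.
Variable le : W -> W -> Prop.
Variable lab : W -> fset.

Local Notation cl := (cls le lab).
Local Notation Q := (quot le lab).

Lemma sim_refl w : sim le lab w w.
Proof. split; intro; tauto. Qed.

Lemma sim_sym w v : sim le lab w v -> sim le lab v w.
Proof. intros [hl hL]; split; intro x; [specialize (hl x) | specialize (hL x)]; tauto. Qed.

Lemma sim_trans u w v : sim le lab u w -> sim le lab w v -> sim le lab u v.
Proof.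
  intros [hl1 hL1] [hl2 hL2]; split; intro x;
    [specialize (hl1 x); specialize (hl2 x) | specialize (hL1 x); specialize (hL2 x)];
    tauto.
Qed.

Lemma quot_ext (X Y : Q) : proj1_sig X = proj1_sig Y -> X = Y.
Proof.
  destruct X as [P p], Y as [P' p']; simpl; intros ->.
  f_equal; apply proof_irrelevance.
Qed.

Lemma cls_eq_iff w v : cl w = cl v <-> sim le lab w v.
Proof.
  split.
  - intro e; apply (f_equal (@proj1_sig _ _)) in e; simpl in e.
    rewrite e; apply sim_refl.
  - intro h; apply quot_ext; simpl.
    apply functional_extensionality; intro u; apply propositional_extensionality.
    split; intro h'; eauto using sim_trans, sim_sym.
Qed.

Lemma quot_cls (X : Q) : exists w, X = cl w.
Proof.
  destruct X as [P [w e]]; exists w; apply quot_ext; exact e.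
Qed.

Lemma labQ_cls w : labQ (cl w) = lab w.
Proof.
  apply functional_extensionality; intro f; apply propositional_extensionality.
  split.
  - intros [w' [e h]]; apply cls_eq_iff in e as [hl _]; apply hl, h.
  - intro h; exists w; auto.
Qed.

Lemma leQ_cls w v :
  leQ (cl w) (cl v) <-> Lseteq le lab w v /\ subset (lab v) (lab w).
Proof.
  split.
  - intros (w' & v' & e1 & e2 & hL & hl).
    apply cls_eq_iff in e1 as [l1 L1]; apply cls_eq_iff in e2 as [l2 L2].
    split; intro x; [specialize (L1 x); specialize (L2 x); specialize (hL x)
                    | specialize (l1 x); specialize (l2 x); specialize (hl x)];
      tauto.
  - intros [hL hl]; exists w, v; auto.
Qed.

Lemma leQ_refl (X : Q) : leQ X X.
Proof.
  destruct (quot_cls X) as [x ->]; apply leQ_cls.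
  split; intro; tauto.
Qed.

Lemma leQ_trans (X Y Z : Q) : leQ X Y -> leQ Y Z -> leQ X Z.
Proof.
  destruct (quot_cls X) as [x ->], (quot_cls Y) as [y ->], (quot_cls Z) as [z ->].
  rewrite !leQ_cls; intros [L1 l1] [L2 l2].
  split; intro T; [specialize (L1 T); specialize (L2 T); tauto | auto].
Qed.

Lemma leQ_antisym (X Y : Q) : leQ X Y -> leQ Y X -> X = Y.
Proof.
  destruct (quot_cls X) as [x ->], (quot_cls Y) as [y ->].
  rewrite !leQ_cls; intros [L l1] [_ l2].
  apply cls_eq_iff; split; [intro f; split; auto | exact L].
Qed.

Lemma labQ_antitone (X Y : Q) : leQ X Y -> subset (labQ Y) (labQ X).
Proof.
  destruct (quot_cls X) as [x ->], (quot_cls Y) as [y ->].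
  rewrite !labQ_cls, leQ_cls; tauto.
Qed.

Hypothesis le_ll : locally_linear le.
Hypothesis lab_antitone : forall w v, le w v -> subset (lab v) (lab w).

Lemma Lseteq_of_comparable u p : comparable le u p -> Lseteq le lab u p.
Proof.
  intros hc T; split; intros [v [hv hs]]; exists v; split; auto.
  - eapply comparable_trans; eauto.
  - eapply comparable_trans; eauto using comparable_sym.
Qed.

Lemma le_leQ a b : le a b -> leQ (cl a) (cl b).
Proof.
  intro h; apply leQ_cls; split.
  - apply Lseteq_of_comparable; left; exact h.
  - apply lab_antitone, h.
Qed.

Lemma class_in_component z p :
  Lseteq le lab z p -> exists v, comparable le v p /\ cl v = cl z.
Proof.
  intro hL.
  destruct (proj1 (hL (lab z))) as [v [hv hs]].
  { exists z; split; [left; apply le_ll | intro; tauto]. }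
  exists v; split; [exact hv |].
  apply cls_eq_iff; split; [exact hs |].
  intro T; specialize (hL T); specialize (Lseteq_of_comparable hv T); tauto.
Qed.

Lemma class_below p (X : Q) : leQ X (cl p) -> exists u, le u p /\ X = cl u.
Proof.
  destruct (quot_cls X) as [z ->]; rewrite leQ_cls; intros [hL hl].
  destruct (class_in_component hL) as [v [[hvp | hpv] e]].
  - exists v; auto.
  - exists p; split; [apply le_ll |].
    apply cls_eq_iff in e as [hs _].
    apply cls_eq_iff; split; [| intro T; specialize (hL T); tauto].
    intro f; split; [intro h; apply (lab_antitone hpv), hs, h | apply hl].
Qed.

Lemma class_above p (X : Q) : leQ (cl p) X -> exists u, le p u /\ X = cl u.
Proof.
  destruct (quot_cls X) as [z ->]; rewrite leQ_cls; intros [hL hl].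
  assert (hL' : Lseteq le lab z p) by (intro T; specialize (hL T); tauto).
  destruct (class_in_component hL') as [v [[hvp | hpv] e]].
  - exists p; split; [apply le_ll |].
    apply cls_eq_iff in e as [hs _].
    apply cls_eq_iff; split; [| exact hL'].
    intro f; split; [apply hl | intro h; apply hs, (lab_antitone hvp), h].
  - exists v; auto.
Qed.

Lemma comparable_class (X : Q) y :
  comparable (@leQ W le lab) X (cl y) -> exists x, X = cl x /\ comparable le x y.
Proof.
  intros [h | h].
  - destruct (class_below h) as [x [hx ->]]; exists x; split; [| left]; auto.
  - destruct (class_above h) as [x [hx ->]]; exists x; split; [| right]; auto.
Qed.

Lemma quotient_locally_linear : locally_linear (@leQ W le lab).
Proof.
  apply locally_linear_of_comparable_trans.
  - exact leQ_refl.
  - exact leQ_antisym.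
  - exact leQ_trans.
  - intros X Y Z hXY hYZ.
    destruct (quot_cls Y) as [y ->].
    destruct (comparable_class hXY) as [x [-> hx]].
    destruct (comparable_class (comparable_sym hYZ)) as [z [-> hz]].
    assert (hxz : comparable le x z)
      by (eapply comparable_trans; eauto using comparable_sym).
    destruct hxz; [left | right]; apply le_leQ; assumption.
Qed.

(* Witnesses for implications and co-implications are projected from W. *)
Lemma quotient_labelled_space (Sigma : fset) :
  labelled_space Sigma le lab ->
  labelled_space Sigma (@leQ W le lab) (@labQ W le lab).
Proof.
  intros (_ & types & _ & imp_wit & coimp_wit).
  split; [exact quotient_locally_linear | split; [| split; [| split]]].
  - intro X; destruct (quot_cls X) as [x ->]; rewrite labQ_cls; apply types.
  - intros X Y h; apply labQ_antitone, h.
  - intros X a b hs hn; destruct (quot_cls X) as [w ->]; rewrite labQ_cls in hn.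
    destruct (imp_wit w a b hs hn) as [v [h1 h2]].
    exists (cl v); rewrite labQ_cls; split; [apply le_leQ |]; assumption.
  - intros X a b hc; destruct (quot_cls X) as [w ->]; rewrite labQ_cls in hc.
    destruct (coimp_wit w a b hc) as [v [h1 h2]].
    exists (cl v); rewrite labQ_cls; split; [apply le_leQ |]; assumption.
Qed.

Variable R : W -> W -> Prop.

Lemma RQ_bi_serial : bi_serial R -> bi_serial (@RQ W le lab R).
Proof.
  intros ser X; destruct (quot_cls X) as [x ->].
  destruct (ser x) as [[y hy] [z hz]].
  split; [exists (cl y), x, y | exists (cl z), z, x]; auto.
Qed.

Lemma RQ_sensible (Sigma : fset) :
  sensible_rel Sigma lab R -> sensible_rel Sigma (@labQ W le lab) (@RQ W le lab R).
Proof.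
  intros sens X Y (a & b & -> & -> & hab); rewrite !labQ_cls; apply sens, hab.
Qed.

(* Confluence of R lifts to R_Q: the classes involved are realised by
   representatives placed in the right order next to an R-edge. *)
Lemma RQ_confluent : fully_confluent le R -> fully_confluent (@leQ W le lab) (@RQ W le lab R).
Proof.
  intros (fd & fu & bd & bu).
  split; [|split; [|split]].
  - intros X X' Y' hle (a & b & -> & -> & hab).
    destruct (class_below hle) as [u [hu ->]].
    destruct (fd u a b hu hab) as [y [r h]].
    exists (cl y); split; [exists u, y | apply le_leQ]; auto.
  - intros X X' Y hle (a & b & -> & -> & hab).
    destruct (class_above hle) as [u [hu ->]].
    destruct (fu a u b hu hab) as [y [r h]].
    exists (cl y); split; [exists u, y | apply le_leQ]; auto.
  - intros X' Y' Y (a & b & -> & -> & hab) hle.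
    destruct (class_below hle) as [v [hv ->]].
    destruct (bd a b v hab hv) as [x [h r]].
    exists (cl x); split; [apply le_leQ | exists x, v]; auto.
  - intros X Y Y' (a & b & -> & -> & hab) hle.
    destruct (class_above hle) as [v [hv ->]].
    destruct (bu a b v hab hv) as [x [h r]].
    exists (cl x); split; [apply le_leQ | exists x, v]; auto.
Qed.

End Quotient.

Theorem proposition6p2 (Sigma : fset) (W : Type) (le : W -> W -> Prop)
  (lab : W -> fset) (R : W -> W -> Prop) :
  subformula_closed Sigma ->
  labelled_system Sigma le lab R ->
  labelled_system Sigma (@leQ W le lab) (@labQ W le lab) (@RQplus W le lab R).
Proof.
  intros _ (space & serial & conf & _ & sens).
  pose proof space as (ll & _ & antitone & _).
  change (RQplus R) with (convex_closure (@leQ W le lab) (@RQ W le lab R)).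
  pose proof (@leQ_refl W le lab) as refl_Q.
  pose proof (@leQ_trans W le lab) as trans_Q.
  pose proof (RQ_confluent ll antitone conf) as conf_Q.
  split; [| split; [| split; [| split]]].
  - exact (quotient_labelled_space ll antitone space).
  - exact (convex_closure_bi_serial refl_Q (RQ_bi_serial serial)).
  - exact (convex_closure_confluent refl_Q trans_Q conf_Q).
  - exact (convex_closure_convex trans_Q _).
  - exact (convex_closure_sensible trans_Q conf_Q
             (@labQ_antitone W le lab) (RQ_sensible sens)).
Qed.
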